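(* Assume condition (S). Let $\Phi_n=(\phi_n,(\phi_n)'_1)$, $n\ge1$, be normalized eigenelements of $K$ as in the expansion theorem, with each $\phi_n$ real-valued. Then $$\sum_{n=1}^{\infty}\big[(\phi_n)'_1\big]^2=\frac{\rho}{p(1)}\qquad\text{and}\qquad\sum_{n=1}^{\infty}(\phi_n)'_1\,\phi_n(x)=0,$$ the second series converging to $0$ in $L_2([-1,1],r)$.
   Context: Fix $-1<h_1<h_2<1$ and put $\Omega:=[-1,h_1)\cup(h_1,h_2)\cup(h_2,1]$. Let $r,p,q$ be real-valued functions such that $r,p,p',q$ are continuous on each of $[-1,h_1)$, $(h_1,h_2)$, $(h_2,1]$ and have finite one-sided limits at $h_1$ and $h_2$ (denoted $f(h\pm 0)$), with $r(x)>0$, $p(x)>0$ on $\Omega$. Let $\alpha_1,\alpha_2,\beta_1,\beta_2,\gamma_j,\delta_j$ ($j=1,\dots,4$) be real numbers with $|\beta_1|+|\beta_2|\neq0$, all $\gamma_j\neq0$, $\delta_j\neq0$, and $\rho:=\alpha_1\beta_2-\alpha_2\beta_1>0$. Condition (S): $\delta_1\delta_2\,p(h_1-0)=\gamma_1\gamma_2\,p(h_1+0)$ and $\delta_3\delta_4\,p(h_2-0)=\gamma_3\gamma_4\,p(h_2+0)$. Put $\ell u:=\frac{1}{r(x)}\{-(p(x)u')'+q(x)u\}$, and for a function $u$ set $(u)_1:=\beta_1u(1)-\beta_2u'(1)$, $(u)'_1:=\alpha_1u(1)-\alpha_2u'(1)$. Let $H=L_2[-1,1]\oplus\mathbb{C}$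 with inner product $\langle T,G\rangle:=\int_{-1}^{1}T_1\overline{G_1}r\,dx+\frac{p(1)}{\rho}T_2\overline{G_2}$. The operator $K$ has domain $D(K)$ of those $T=(T_1,T_2)\in H$ with $T_1,T_1'$ absolutely continuous on each of the three subintervals, finite limits $T_1(h_i\pm0),T_1'(h_i\pm0)$, $\ell T_1\in L_2[-1,1]$, $T_1(-1)=0$, $\gamma_1T_1(h_1-0)=\delta_1T_1(h_1+0)$, $\gamma_2T_1'(h_1-0)=\delta_2T_1'(h_1+0)$, $\gamma_3T_1(h_2-0)=\delta_3T_1(h_2+0)$, $\gamma_4T_1'(h_2-0)=\delta_4T_1'(h_2+0)$, and $T_2=(T_1)'_1$; $KT:=(\ell T_1,-(T_1)_1)$. Under (S), $K$ has real eigenvalues $\lambda_1\le\lambda_2\le\cdots$ (with multiplicity) and eigenelements $\Phi_n=(\phi_n,(\phi_n)'_1)$, $\|\Phi_n\|_H=1$, such that $T=\sum_n\langle T,\Phi_n\rangle\Phi_n$ in $H$ for every $T\in H$. *)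

From Stdlib Require Import Reals Lra ClassicalEpsilon.
Open Scope R_scope.

Definition has_deriv_within (D : R -> Prop) (f : R -> R) (x l : R) : Prop :=
  forall eps, 0 < eps -> exists delta, 0 < delta /\
    forall y, D y -> y <> x -> Rabs (y - x) < delta ->
      Rabs ((f y - f x) / (y - x) - l) < eps.

Definition cont_within (D : R -> Prop) (f : R -> R) (x : R) : Prop :=
  forall eps, 0 < eps -> exists delta, 0 < delta /\
    forall y, D y -> Rabs (y - x) < delta -> Rabs (f y - f x) < eps.

Definition lim_within (D : R -> Prop) (f : R -> R) (x l : R) : Prop :=
  forall eps, 0 < eps -> exists delta, 0 < delta /\
    forall y, D y -> y <> x -> Rabs (y - x) < delta -> Rabs (f y - l) < eps.

Definition I1 (h1 : R) (x : R) : Prop := -1 <= x < h1.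
Definition I2 (h1 h2 : R) (x : R) : Prop := h1 < x < h2.
Definition I3 (h2 : R) (x : R) : Prop := h2 < x <= 1.
Definition Omega (h1 h2 : R) (x : R) : Prop := I1 h1 x \/ I2 h1 h2 x \/ I3 h2 x.

Definition piecewise_cont (h1 h2 : R) (f : R -> R) : Prop :=
  (forall x, I1 h1 x -> cont_within (I1 h1) f x) /\
  (forall x, I2 h1 h2 x -> cont_within (I2 h1 h2) f x) /\
  (forall x, I3 h2 x -> cont_within (I3 h2) f x) /\
  (exists l, lim_within (I1 h1) f h1 l) /\
  (exists l, lim_within (I2 h1 h2) f h1 l) /\
  (exists l, lim_within (I2 h1 h2) f h2 l) /\
  (exists l, lim_within (I3 h2) f h2 l).

Definition deriv_on_pieces (h1 h2 : R) (f df : R -> R) : Prop :=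
  (forall x, I1 h1 x -> has_deriv_within (I1 h1) f x (df x)) /\
  (forall x, I2 h1 h2 x -> has_deriv_within (I2 h1 h2) f x (df x)) /\
  (forall x, I3 h2 x -> has_deriv_within (I3 h2) f x (df x)).

Definition transmission (Dl Dr : R -> Prop) (h g d : R) (f : R -> R) : Prop :=
  exists a b, lim_within Dl f h a /\ lim_within Dr f h b /\ g * a = d * b.

(* (u)_1 = b1 u(1) - b2 u'(1)  resp. (u)'_1 = a1 u(1) - a2 u'(1) *)
Definition bc1 (c1 c2 : R) (u du : R -> R) : R := c1 * u 1 - c2 * du 1.

(* Riemann integrability and (classical) value of the Riemann integral;
   RInt is only used on Riemann integrable functions. *)
Definition IntegrableR (f : R -> R) (a b : R) : Prop :=
  inhabited (Riemann_integrable f a b).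

Definition RInt (f : R -> R) (a b : R) : R :=
  match excluded_middle_informative
          (exists v : R, exists pr : Riemann_integrable f a b, RiemannInt pr = v)
  with
  | left H => proj1_sig (constructive_indefinite_description _ H)
  | right _ => 0
  end.

Fixpoint psum (a : nat -> R) (N : nat) : R :=
  match N with
  | O => 0
  | S k => psum a k + a k
  end.

(* inner product and squared norm of H = L2([-1,1], r) (+) R, real case *)
Definition Hinner (r : R -> R) (p1 rho : R) (T1 : R -> R) (T2 : R)
  (G1 : R -> R) (G2 : R) : R :=
  RInt (fun x => T1 x * G1 x * r x) (-1) 1 + p1 / rho * T2 * G2.

Definition Hnorm2 (r : R -> R) (p1 rho : R) (T1 : R -> R) (T2 : R) : R :=
  RInt (fun x => T1 x ^ 2 * r x) (-1) 1 + p1 / rho * T2 ^ 2.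

(* Expansion property  T = sum_n <T,Phi_n> Phi_n  in H, for (real)
   T = (T1,T2) with T1 Riemann integrable on [-1,1]. *)
Definition expansion (r : R -> R) (p1 rho : R)
  (phi : nat -> R -> R) (c : nat -> R) : Prop :=
  forall (T1 : R -> R) (T2 : R), IntegrableR T1 (-1) 1 ->
    let coef := fun n => Hinner r p1 rho T1 T2 (phi n) (c n) in
    (forall N, IntegrableR
       (fun x => (T1 x - psum (fun n => coef n * phi n x) N) ^ 2 * r x) (-1) 1) /\
    Un_cv (fun N => Hnorm2 r p1 rho
             (fun x => T1 x - psum (fun n => coef n * phi n x) N)
             (T2 - psum (fun n => coef n * c n) N)) 0.

(* Phi = (phi, (phi)'_1) is an eigenelement of K for eigenvalue lam;
   dphi is the derivative of phi on the subintervals. *)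
Definition eigenelement (h1 h2 : R) (r p q : R -> R)
  (a1 a2 b1 b2 g1 g2 g3 g4 d1 d2 d3 d4 : R)
  (lam : R) (phi dphi : R -> R) : Prop :=
  deriv_on_pieces h1 h2 phi dphi /\
  (* l phi = lam phi, i.e. (p phi')' = q phi - lam r phi on Omega *)
  deriv_on_pieces h1 h2 (fun x => p x * dphi x)
                        (fun x => q x * phi x - lam * r x * phi x) /\
  phi (-1) = 0 /\
  transmission (I1 h1) (I2 h1 h2) h1 g1 d1 phi /\
  transmission (I1 h1) (I2 h1 h2) h1 g2 d2 dphi /\
  transmission (I2 h1 h2) (I3 h2) h2 g3 d3 phi /\
  transmission (I2 h1 h2) (I3 h2) h2 g4 d4 dphi /\
  (* second component: -(phi)_1 = lam (phi)'_1 *)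
  - bc1 b1 b2 phi dphi = lam * bc1 a1 a2 phi dphi.

From Stdlib Require Import Reals Lra Lia FunctionalExtensionality ClassicalEpsilon.
Open Scope R_scope.

(* Put rho = a1 b2 - a2 b1,
   c_n = (phi_n)'_1 and k = p(1)/rho > 0.  Apply the expansion theorem to the
   element T = (0, 1) of H.  Its Fourier coefficients are
   <T, Phi_n> = k c_n, so the squared H-norm of the N-th residual is
       k^2 * int_{-1}^{1} (sum_{n<N} c_n phi_n)^2 r  +  k (1 - k S_N)^2,
   with S_N = sum_{n<N} c_n^2.  Both summands are nonnegative (r > 0 off the
   points h1, h2) and their sum tends to 0, so each tends to 0: the first gives
   the L2 statement, the second gives S_N -> 1/k = rho/p(1). *)

Lemma RInt_eq (f : R -> R) (a b : R) (pr : Riemann_integrable f a b) :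
  RInt f a b = RiemannInt pr.
Proof.
  unfold RInt. destruct (excluded_middle_informative _) as [H|H].
  - destruct (constructive_indefinite_description _ H) as [v [pr' Hv]]; simpl.
    rewrite <- Hv. apply RiemannInt_P5.
  - exfalso; apply H; exists (RiemannInt pr), pr; reflexivity.
Qed.

Lemma RInt_const (c a b : R) : RInt (fun _ => c) a b = c * (b - a).
Proof.
  rewrite (RInt_eq (fun _ => c) a b (RiemannInt_P14 a b c)).
  apply RiemannInt_P15.
Qed.

Lemma RInt_scal (f : R -> R) (a b k : R) : IntegrableR f a b ->
  RInt (fun x => k * f x) a b = k * RInt f a b.
Proof.
  intros [pr].
  assert (Hext : (fun x => k * f x) = (fun x => fct_cte 0 x + k * f x)).
  { extensionality x; unfold fct_cte; ring. }
  pose (pr0 := RiemannInt_P14 a b 0).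
  rewrite Hext, (RInt_eq _ _ _ (RiemannInt_P10 k pr0 pr)), (RInt_eq _ _ _ pr).
  rewrite (RiemannInt_P13 pr0 pr), RiemannInt_P15. ring.
Qed.

Lemma IntegrableR_scal_cancel (f : R -> R) (a b k : R) : k <> 0 ->
  IntegrableR (fun x => k * f x) a b -> IntegrableR f a b.
Proof.
  intros Hk [pr]; constructor.
  refine (@Riemann_integrable_ext (fun x => / k * (k * f x)) f a b _
            (Riemann_integrable_scal (/ k) pr)).
  intros x _; field; exact Hk.
Qed.

Lemma RiemannInt_nonneg (f : R -> R) (a b : R) (pr : Riemann_integrable f a b) :
  a <= b -> (forall x, a < x < b -> 0 <= f x) -> 0 <= RiemannInt pr.
Proof.
  intros Hab Hf.
  pose proof (RiemannInt_P19 (RiemannInt_P14 a b 0) pr Hab) as L.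
  rewrite RiemannInt_P15 in L.
  replace 0 with (0 * (b - a)) by ring.
  apply L; intros; unfold fct_cte; auto.
Qed.

(* The same when nonnegativity may fail at two interior points m1 <= m2;
   this is how r > 0 on Omega is used. *)
Lemma RInt_nonneg_pieces (f : R -> R) (a m1 m2 b : R) :
  a <= m1 <= m2 /\ m2 <= b -> IntegrableR f a b ->
  (forall x, (a < x < m1) \/ (m1 < x < m2) \/ (m2 < x < b) -> 0 <= f x) ->
  0 <= RInt f a b.
Proof.
  intros Hm [pr] Hf.
  rewrite (RInt_eq _ _ _ pr).
  assert (pr1 : Riemann_integrable f a m1) by (apply (RiemannInt_P22 pr); lra).
  assert (prB : Riemann_integrable f m1 b) by (apply (RiemannInt_P23 pr); lra).
  assert (pr2 : Riemann_integrable f m1 m2) by (apply (RiemannInt_P22 prB); lra).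
  assert (pr3 : Riemann_integrable f m2 b) by (apply (RiemannInt_P23 prB); lra).
  rewrite <- (RiemannInt_P26 pr1 prB pr), <- (RiemannInt_P26 pr2 pr3 prB).
  assert (0 <= RiemannInt pr1) by (apply RiemannInt_nonneg; [lra | intros; apply Hf; lra]).
  assert (0 <= RiemannInt pr2) by (apply RiemannInt_nonneg; [lra | intros; apply Hf; lra]).
  assert (0 <= RiemannInt pr3) by (apply RiemannInt_nonneg; [lra | intros; apply Hf; lra]).
  lra.
Qed.

Lemma psum_ext (a b : nat -> R) (N : nat) :
  (forall n, a n = b n) -> psum a N = psum b N.
Proof. intros H; induction N; simpl; [reflexivity | rewrite IHN, H; reflexivity]. Qed.

Lemma psum_scal (k : R) (a : nat -> R) (N : nat) :
  psum (fun n => k * a n) N = k * psum a N.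
Proof. induction N; simpl; [ring | rewrite IHN; ring]. Qed.

Lemma infinite_sum_of_psum (a : nat -> R) (l : R) :
  Un_cv (psum a) l -> infinite_sum a l.
Proof.
  assert (E : forall n, sum_f_R0 a n = psum a (S n)).
  { induction n; simpl in *; [ring | rewrite IHn; reflexivity]. }
  intros H eps He. destruct (H eps He) as [N0 HN].
  exists N0; intros n Hn. rewrite E. apply HN. lia.
Qed.

Lemma Un_cv_nonneg_sum_0 (u v : nat -> R) :
  (forall n, 0 <= u n) -> (forall n, 0 <= v n) ->
  Un_cv (fun n => u n + v n) 0 -> Un_cv u 0 /\ Un_cv v 0.
Proof.
  intros Hu Hv H. split; intros eps He; destruct (H eps He) as [N0 HN];
    exists N0; intros n Hn; specialize (HN n Hn);
    pose proof (Hu n); pose proof (Hv n); unfold R_dist in *;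
    rewrite Rminus_0_r in *; rewrite Rabs_right in * by lra; lra.
Qed.

Lemma Un_cv_scal_cancel (k : R) (u : nat -> R) : k <> 0 ->
  Un_cv (fun n => k * u n) 0 -> Un_cv u 0.
Proof.
  intros Hk H eps He.
  assert (Hka : 0 < Rabs k) by (apply Rabs_pos_lt; exact Hk).
  destruct (H (Rabs k * eps)) as [N0 HN]; [apply Rmult_lt_0_compat; lra |].
  exists N0; intros n Hn; specialize (HN n Hn). unfold R_dist in *.
  rewrite Rminus_0_r, Rabs_mult in *.
  apply Rmult_lt_reg_l with (Rabs k); assumption.
Qed.

Lemma Un_cv_of_sq (a : nat -> R) (l : R) :
  Un_cv (fun n => (a n - l) ^ 2) 0 -> Un_cv a l.
Proof.
  intros H eps He.
  destruct (H (eps ^ 2)) as [N0 HN]; [apply pow_lt; lra |].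
  exists N0; intros n Hn; specialize (HN n Hn). unfold R_dist in *.
  rewrite Rminus_0_r, Rabs_right in HN by (apply Rle_ge, pow2_ge_0).
  rewrite <- (Rabs_right eps) by lra.
  apply Rsqr_lt_abs_0. unfold Rsqr. nra.
Qed.

Section UnitVectorResidual.

Variables (r : R -> R) (p1 rho : R) (phi : nat -> R -> R) (c : nat -> R).
Hypothesis Hrho : rho <> 0.

Let k := p1 / rho.
Let coef (n : nat) : R := Hinner r p1 rho (fun _ => 0) 1 (phi n) (c n).
Let series_sq (N : nat) (x : R) : R := (psum (fun n => c n * phi n x) N) ^ 2 * r x.

Lemma coef_unit_vector (n : nat) : coef n = k * c n.
Proof.
  unfold coef, Hinner.
  replace (fun x => 0 * phi n x * r x) with (fun _ : R => 0)
    by (extensionality x; ring).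
  rewrite RInt_const. unfold k; ring.
Qed.

Lemma residual_integrand_unit_vector (N : nat) :
  (fun x => (0 - psum (fun n => coef n * phi n x) N) ^ 2 * r x)
  = (fun x => k ^ 2 * series_sq N x).
Proof.
  extensionality x.
  rewrite (psum_ext _ (fun n => k * (c n * phi n x)))
    by (intro; rewrite coef_unit_vector; ring).
  rewrite psum_scal. unfold series_sq; ring.
Qed.

Lemma residual_norm_unit_vector (N : nat) :
  IntegrableR (series_sq N) (-1) 1 ->
  Hnorm2 r p1 rho (fun x => 0 - psum (fun n => coef n * phi n x) N)
         (1 - psum (fun n => coef n * c n) N)
  = k ^ 2 * RInt (series_sq N) (-1) 1
    + k * (1 - k * psum (fun n => c n ^ 2) N) ^ 2.
Proof.
  intros Hint. unfold Hnorm2.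
  rewrite residual_integrand_unit_vector, RInt_scal by exact Hint.
  rewrite (psum_ext _ (fun n => k * c n ^ 2))
    by (intro; rewrite coef_unit_vector; ring).
  rewrite psum_scal. unfold k; field. exact Hrho.
Qed.

End UnitVectorResidual.

Theorem corollary4p2
  (h1 h2 : R) (r p q dp : R -> R)
  (a1 a2 b1 b2 g1 g2 g3 g4 d1 d2 d3 d4 : R)
  (lam : nat -> R) (phi dphi : nat -> R -> R)
  (Hh : -1 < h1 /\ h1 < h2 /\ h2 < 1)
  (Hr : piecewise_cont h1 h2 r) (Hq : piecewise_cont h1 h2 q)
  (Hp : piecewise_cont h1 h2 p)
  (Hdp : deriv_on_pieces h1 h2 p dp) (Hdpc : piecewise_cont h1 h2 dp)
  (Hrpos : forall x, Omega h1 h2 x -> 0 < r x)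
  (Hppos : forall x, Omega h1 h2 x -> 0 < p x)
  (Hb : Rabs b1 + Rabs b2 <> 0)
  (Hg : g1 <> 0 /\ g2 <> 0 /\ g3 <> 0 /\ g4 <> 0)
  (Hd : d1 <> 0 /\ d2 <> 0 /\ d3 <> 0 /\ d4 <> 0)
  (Hrho : 0 < a1 * b2 - a2 * b1)
  (HS : (forall pl pr, lim_within (I1 h1) p h1 pl -> lim_within (I2 h1 h2) p h1 pr ->
           d1 * d2 * pl = g1 * g2 * pr) /\
        (forall pl pr, lim_within (I2 h1 h2) p h2 pl -> lim_within (I3 h2) p h2 pr ->
           d3 * d4 * pl = g3 * g4 * pr))
  (Heig : forall n, eigenelement h1 h2 r p q a1 a2 b1 b2 g1 g2 g3 g4 d1 d2 d3 d4
                      (lam n) (phi n) (dphi n))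
  (Hmono : forall n, lam n <= lam (S n))
  (Hnorm : forall n, Hnorm2 r (p 1) (a1 * b2 - a2 * b1) (phi n)
                       (bc1 a1 a2 (phi n) (dphi n)) = 1)
  (Hexp : expansion r (p 1) (a1 * b2 - a2 * b1) phi
            (fun n => bc1 a1 a2 (phi n) (dphi n))) :
  infinite_sum (fun n => (bc1 a1 a2 (phi n) (dphi n)) ^ 2)
               ((a1 * b2 - a2 * b1) / p 1) /\
  (forall N, IntegrableR
     (fun x => (psum (fun n => bc1 a1 a2 (phi n) (dphi n) * phi n x) N) ^ 2 * r x)
     (-1) 1) /\
  Un_cv (fun N => RInt
     (fun x => (psum (fun n => bc1 a1 a2 (phi n) (dphi n) * phi n x) N) ^ 2 * r x)
     (-1) 1) 0.
Proof.
  set (rho := a1 * b2 - a2 * b1) in *.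
  set (c := fun n => bc1 a1 a2 (phi n) (dphi n)) in *.
  set (series_sq := fun N x => (psum (fun n => c n * phi n x) N) ^ 2 * r x).
  assert (Hp1 : 0 < p 1) by (apply Hppos; right; right; unfold I3; lra).
  assert (Hk : 0 < p 1 / rho) by (apply Rdiv_lt_0_compat; assumption).
  (* expand T = (0, 1); both parts of the residual norm are nonnegative *)
  destruct (Hexp (fun _ => 0) 1 (inhabits (RiemannInt_P14 (-1) 1 0)))
    as [Hres_int Hres_cv].
  assert (Hint : forall N, IntegrableR (series_sq N) (-1) 1).
  { intro N. apply (IntegrableR_scal_cancel _ _ _ ((p 1 / rho) ^ 2));
      [apply pow_nonzero; lra |].
    pose proof (Hres_int N) as HI; cbv zeta in HI.
    rewrite (residual_integrand_unit_vector r (p 1) rho phi c) in HI; exact HI. }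
  assert (Hpos : forall N, 0 <= RInt (series_sq N) (-1) 1).
  { intro N. apply (RInt_nonneg_pieces _ _ h1 h2); [lra | apply Hint |].
    intros x Hx. apply Rmult_le_pos; [apply pow2_ge_0 |].
    apply Rlt_le, Hrpos. unfold Omega, I1, I2, I3; lra. }
  assert (Hcv : Un_cv (fun N => (p 1 / rho) ^ 2 * RInt (series_sq N) (-1) 1
      + p 1 / rho * (1 - p 1 / rho * psum (fun n => c n ^ 2) N) ^ 2) 0).
  { eapply Un_cv_ext; [| exact Hres_cv].
    intro N; apply residual_norm_unit_vector; [lra | apply Hint]. }
  apply Un_cv_nonneg_sum_0 in Hcv as [Hcv_L2 Hcv_bd];
    [| intro N; apply Rmult_le_pos; [apply pow2_ge_0 | apply Hpos]
     | intro N; apply Rmult_le_pos; [lra | apply pow2_ge_0]].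
  (* the boundary part gives the Parseval identity, the L2 part the second claim *)
  split; [| split; [exact Hint |]].
  - apply infinite_sum_of_psum, Un_cv_of_sq.
    apply (Un_cv_scal_cancel ((p 1 / rho) ^ 3)); [apply pow_nonzero; lra |].
    eapply Un_cv_ext; [| exact Hcv_bd].
    intro N; cbv beta; unfold c; field; lra.
  - apply (Un_cv_scal_cancel ((p 1 / rho) ^ 2)); [apply pow_nonzero; lra |].
    exact Hcv_L2.
Qed.
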